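(* Let $R$ be a von Neumann regular ring and $M$ a right $R$-module, and let $A=\mathrm{Ann}_R(M)$. Then $M$ is $\Sigma$-$\aleph_0$-injective if and only if $R/A$ is an Artinian ring.
   Context: A right $R$-module $N$ is $\aleph_0$-injective if every $R$-homomorphism from a countably generated right ideal of $R$ into $N$ extends to $R$. $M$ is $\Sigma$-$\aleph_0$-injective if the direct sum $M^{(\Lambda)}$ of $\Lambda$ copies of $M$ is $\aleph_0$-injective for every index set $\Lambda$. $\mathrm{Ann}_R(M)=\{r\in R: Mr=0\}$. *)

From HB Require Import structures.
From mathcomp Require Import all_boot all_algebra.
From Stdlib Require Import List.
Set Implicit Arguments. Unset Strict Implicit. Unset Printing Implicit Defensive.
Import GRing.Theory.
Local Open Scope ring_scope.

(* Rings are (possibly non-commutative) unital rings [nzRingType].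
   A right R-module is a left module over the converse ring R^c:
   the right action m.r is written (r : R^c) *: m. *)

Definition von_neumann_regular (R : nzRingType) : Prop :=
  forall a : R, exists x : R, a * x * a = a.

Definition right_ideal (R : nzRingType) (J : R -> Prop) : Prop :=
  [/\ J 0, (forall x y, J x -> J y -> J (x - y)) & (forall x r, J x -> J (x * r))].

Definition gen_right_ideal (R : nzRingType) (g : nat -> R) (x : R) : Prop :=
  exists (n : nat) (r : nat -> R), x = \sum_(i < n) g i * r i.

(* Generic aleph_0-injectivity of a right R-module whose elements are the
   elements of carrier N satisfying S, with addition [add] and right action
   [act] : every R-homomorphism from a countably generated right ideal I of R
   into the module extends to an R-homomorphism R -> module. *)
Definition aleph0_inj_gen (R : nzRingType) (N : Type)
  (add : N -> N -> N) (act : N -> R -> N) (S : N -> Prop) : Prop :=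
  forall (g : nat -> R) (f : R -> N),
    let I := gen_right_ideal g in
    (forall x, I x -> S (f x)) ->
    (forall x y, I x -> I y -> f (x + y) = add (f x) (f y)) ->
    (forall x r, I x -> f (x * r) = act (f x) r) ->
    exists h : R -> N,
      [/\ (forall x, S (h x)),
          (forall x y, h (x + y) = add (h x) (h y)),
          (forall x r, h (x * r) = act (h x) r)
        & (forall x, I x -> h x = f x)].

Definition ract (R : nzRingType) (M : lmodType R^c) (m : M) (r : R) : M :=
  (r : R^c) *: m.

Definition aleph0_injective (R : nzRingType) (M : lmodType R^c) : Prop :=
  aleph0_inj_gen (@GRing.add M) (@ract R M) (fun _ => True).

(* The direct sum M^(L): finitely supported functions L -> M with
   pointwise operations. *)
Definition dsum_add (R : nzRingType) (M : lmodType R^c) (L : Type)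
  (u v : L -> M) : L -> M := fun l => u l + v l.
Definition dsum_act (R : nzRingType) (M : lmodType R^c) (L : Type)
  (u : L -> M) (r : R) : L -> M := fun l => ract (u l) r.
Definition fin_supp (R : nzRingType) (M : lmodType R^c) (L : Type)
  (u : L -> M) : Prop :=
  exists s : list L, forall l, ~ In l s -> u l = 0.

Definition Sigma_aleph0_injective (R : nzRingType) (M : lmodType R^c) : Prop :=
  forall L : Type,
    aleph0_inj_gen (@dsum_add R M L) (@dsum_act R M L) (@fin_supp R M L).

Definition Ann (R : nzRingType) (M : lmodType R^c) (r : R) : Prop :=
  forall m : M, ract m r = 0.

(* R/A is (right) Artinian, for a two-sided ideal A: descending chain
   condition on right ideals of R/A, i.e. (correspondence theorem) on right
   ideals of R containing A. *)
Definition quotient_artinian (R : nzRingType) (A : R -> Prop) : Prop :=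
  forall J : nat -> R -> Prop,
    (forall n, right_ideal (J n) /\ (forall a, A a -> J n a)) ->
    (forall n x, J n.+1 x -> J n x) ->
    exists N : nat, forall n, (N <= n)%N -> forall x, J n x <-> J N x.

From mathcomp Require Import all_boot all_algebra.
From Stdlib Require Import Classical ClassicalEpsilon FunctionalExtensionality List.
Set Implicit Arguments. Unset Strict Implicit. Unset Printing Implicit Defensive.
Import GRing.Theory.
Local Open Scope ring_scope.

(* Both sides are equivalent to the absence of an infinite sequence of
   pairwise orthogonal idempotents modulo A = Ann(M) lying outside A.  Without
   such a sequence every right ideal J of the regular ring R is principal
   modulo A (J is contained in eR + A for an idempotent e of J), since otherwise
   idempotents of J could be enlarged by orthogonal ones forever.  This
   principality yields the extensions required by Sigma-aleph_0-injectivity and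
   the stabilisation of descending chains; conversely such a sequence yields a
   non-extendable map into M^(N) and a strictly descending chain of right
   annihilators. *)

Section RightIdeals.
Variables (R : nzRingType) (J : R -> Prop).
Hypothesis hJ : right_ideal J.

Lemma rideal0 : J 0. Proof. by case: hJ. Qed.

Lemma ridealB x y : J x -> J y -> J (x - y).
Proof. by case: hJ => _ + _; apply. Qed.

Lemma ridealM x r : J x -> J (x * r).
Proof. by case: hJ => _ _; apply. Qed.

Lemma ridealN x : J x -> J (- x).
Proof. by move=> Jx; rewrite -sub0r; apply: ridealB => //; apply: rideal0. Qed.

Lemma ridealD x y : J x -> J y -> J (x + y).
Proof. by move=> Jx Jy; rewrite -[y]opprK; apply: ridealB => //; apply: ridealN. Qed.

Lemma rideal_sum n (F : 'I_n -> R) : (forall i, J (F i)) -> J (\sum_(i < n) F i).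
Proof. by move=> JF; apply: big_ind => //; [apply: rideal0 | apply: ridealD]. Qed.

End RightIdeals.

Lemma sum_mul_widen (R : nzRingType) (g r : nat -> R) n k : (n <= k)%N ->
  \sum_(i < n) g i * r i = \sum_(i < k) g i * (if (i < n)%N then r i else 0).
Proof.
move=> le_nk; rewrite (big_ord_widen k (fun i => g i * r i) le_nk) big_mkcond.
by apply: eq_bigr => i _; case: ifP; rewrite ?mulr0.
Qed.

Lemma right_ideal_gen (R : nzRingType) (g : nat -> R) : right_ideal (gen_right_ideal g).
Proof.
split.
- by exists 0%N, (fun _ => 0); rewrite big_ord0.
- move=> _ _ [n [r ->]] [n' [r' ->]].
  exists (maxn n n'),
    (fun i => (if (i < n)%N then r i else 0) - (if (i < n')%N then r' i else 0)).
  rewrite (sum_mul_widen _ _ (leq_maxl n n')) (sum_mul_widen _ _ (leq_maxr n n')) -sumrB.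
  by apply: eq_bigr => i _; rewrite mulrBr.
- move=> _ s [n [r ->]]; exists n, (fun i => r i * s).
  by rewrite mulr_suml; apply: eq_bigr => i _; rewrite mulrA.
Qed.

Lemma gen_right_ideal_gen (R : nzRingType) (g : nat -> R) k : gen_right_ideal g (g k).
Proof.
exists k.+1, (fun j => (j == k)%:R).
rewrite (bigD1 (Ordinal (ltnSn k))) //= eqxx mulr1 big1 ?addr0 // => j ne_jk.
rewrite (_ : (j == k :> nat) = false) ?mulr0 //.
by apply: contraNF ne_jk => /eqP jk; apply/eqP/val_inj.
Qed.

Definition two_sided_ideal (R : nzRingType) (A : R -> Prop) : Prop :=
  right_ideal A /\ forall x a, A a -> A (x * a).

Definition orthogonal_idempotents (R : nzRingType) (A : R -> Prop) (g : nat -> R) : Prop :=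
  [/\ forall i j, i <> j -> A (g i * g j), forall i, A (g i * g i - g i)
    & forall i, ~ A (g i)].

Definition principal_mod (R : nzRingType) (A J : R -> Prop) : Prop :=
  exists e, [/\ J e, A (e * e - e) & forall x, J x -> A (x - e * x)].

Section ModuloIdeal.
Variables (R : nzRingType) (A : R -> Prop).
Hypothesis hA : two_sided_ideal A.

Let rA : right_ideal A := hA.1.

Lemma idealMl x a : A a -> A (x * a).
Proof. exact: hA.2. Qed.

Lemma idem_mod_in_ideal g : A (g * g - g) -> A (g * g) -> A g.
Proof.
move=> idem_g Agg; rewrite -[g](subKr (g * g)).
by apply: (ridealB rA).
Qed.

Lemma orthogonal_corner e g h : A (e * h - h) -> A (h * e - h) ->
  A (g * e) -> A (e * g) -> A (g * h) /\ A (h * g).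
Proof.
move=> eh he ge eg; split.
- have -> : g * h = g * e * h - g * (e * h - h) by rewrite mulrBr mulrA opprB addrC subrK.
  by apply: (ridealB rA) => //; [apply: (ridealM rA) | apply: idealMl].
- have -> : h * g = h * (e * g) - (h * e - h) * g by rewrite mulrBl mulrA opprB addrC subrK.
  by apply: (ridealB rA) => //; [apply: idealMl | apply: (ridealM rA)].
Qed.

Lemma idem_modD e g : A (e * e - e) -> A (g * g - g) -> A (e * g) -> A (g * e) ->
  A ((e + g) * (e + g) - (e + g)).
Proof.
move=> idem_e idem_g eg ge.
rewrite mulrDl !mulrDr opprD addrACA.
by apply: (ridealD rA); [rewrite addrAC | rewrite -addrA]; apply: (ridealD rA).
Qed.

Hypothesis vnr : von_neumann_regular R.

(* Starting from y = x - e x, the idempotent f = y z (where y z y = y) is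
   corrected to f - f e, which is orthogonal to e modulo A. *)
Lemma orthogonal_idempotent_outside J e x : right_ideal J ->
  J e -> A (e * e - e) -> J x -> ~ A (x - e * x) ->
  exists g, [/\ J g, ~ A g, A (g * g - g), A (e * g) & A (g * e)].
Proof.
move=> hJ Je idem_e Jx; set y := x - e * x => nAy.
have Jy : J y by apply: (ridealB hJ) => //; apply: (ridealM hJ).
have Aey : A (e * y).
  have -> : e * y = - ((e * e - e) * x) by rewrite /y mulrBr mulrBl mulrA opprB.
  by apply: (ridealN rA) => //; apply: (ridealM rA).
have [z yzy] := vnr y.
set f := y * z.
have ff : f * f = f by rewrite /f mulrA yzy.
have fy : f * y = y by rewrite /f yzy.
have Aef : A (e * f) by rewrite /f mulrA; apply: (ridealM rA).
have Jf : J f by apply: (ridealM hJ).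
clearbody f; exists (f - f * e); split.
- by apply: (ridealB hJ) => //; apply: (ridealM hJ).
- move=> Ag; apply: nAy; rewrite -fy.
  have -> : f * y = (f - f * e) * y + f * (e * y) by rewrite mulrBl mulrA subrK.
  by apply: (ridealD rA); [apply: (ridealM rA) | apply: idealMl].
- have -> : (f - f * e) * (f - f * e) - (f - f * e) = f * (e * f) * e - f * (e * f).
    by rewrite mulrBl !mulrBr !mulrA ff addrAC subrr add0r opprB.
  by apply: (ridealB rA); [apply: (ridealM rA); apply: idealMl | apply: idealMl].
- by rewrite mulrBr mulrA; apply: (ridealB rA) => //; apply: (ridealM rA).
- have -> : (f - f * e) * e = - (f * (e * e - e)) by rewrite mulrBl mulrBr opprB mulrA.
  by apply: (ridealN rA) => //; apply: idealMl.
Qed.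

(* The orthogonal family is g_n = G(e_n) where e_(n+1) = e_n + g_n, e_0 = 0,
   and G(e) is an idempotent of J orthogonal to e, outside A. *)
Lemma orthogonal_of_not_principal J : right_ideal J -> ~ principal_mod A J ->
  exists g, orthogonal_idempotents A g.
Proof.
move=> hJ nonprincipal.
have [G HG] : exists G : R -> R, forall e, J e -> A (e * e - e) ->
    [/\ J (G e), ~ A (G e), A (G e * G e - G e), A (e * G e) & A (G e * e)].
  apply: (choice (fun e g => J e -> A (e * e - e) ->
    [/\ J g, ~ A g, A (g * g - g), A (e * g) & A (g * e)])) => e.
  have [[Je idem_e]|] := classic (J e /\ A (e * e - e)); last first.
    by move=> not_idem; exists 0 => Je idem_e; case: not_idem.
  have [x [Jx nAx]] : exists x, J x /\ ~ A (x - e * x).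
    apply: NNPP => all_in; apply: nonprincipal; exists e; split=> // x Jx.
    by apply: NNPP => nAx; apply: all_in; exists x.
  have [g Hg] := orthogonal_idempotent_outside hJ Je idem_e Jx nAx.
  by exists g.
pose es n := iter n (fun e => e + G e) 0.
pose gs n := G (es n).
have invariant k : [/\ J (es k), A (es k * es k - es k) &
    forall j, (j < k)%N -> A (es k * gs j - gs j) /\ A (gs j * es k - gs j)].
  elim: k => [|k [Jk idem_k Hk]].
    by split=> //; [apply: (rideal0 hJ) | rewrite mul0r subr0; apply: (rideal0 rA)].
  have [Jg _ idem_g eg ge] := HG _ Jk idem_k.
  split=> /=; [exact: (ridealD hJ) | exact: idem_modD |].
  move=> j; rewrite ltnS leq_eqVlt => /orP[/eqP ->|lt_jk].
    by split; rewrite ?mulrDl ?mulrDr -addrA; apply: (ridealD rA).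
  have [ejk jek] := Hk j lt_jk.
  have [gj jg] := orthogonal_corner ejk jek ge eg.
  by split; rewrite ?mulrDl ?mulrDr addrAC; apply: (ridealD rA).
exists gs; split.
- have lt_orth i j : (i < j)%N -> A (gs i * gs j) /\ A (gs j * gs i).
    move=> lt_ij; have [Jj idem_j Hj] := invariant j; have [eij jei] := Hj i lt_ij.
    have [_ _ _ eg ge] := HG _ Jj idem_j.
    by have [] := orthogonal_corner eij jei ge eg.
  by move=> i j ne_ij; case: (ltngtP i j) => [/lt_orth[]|/lt_orth[]|/ne_ij].
- by move=> i; have [Ji idem_i _] := invariant i; case: (HG _ Ji idem_i).
- by move=> i; have [Ji idem_i _] := invariant i; case: (HG _ Ji idem_i).
Qed.

Lemma principal_mod_of_no_orthogonal J : right_ideal J ->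
  (forall g, ~ orthogonal_idempotents A g) -> principal_mod A J.
Proof.
move=> hJ noorth; apply: NNPP => nonprincipal.
by have [g] := orthogonal_of_not_principal hJ nonprincipal; apply: noorth.
Qed.

End ModuloIdeal.

Lemma regular_converse (R : nzRingType) : von_neumann_regular R -> von_neumann_regular R^c.
Proof. by move=> vnr a; have [x] := vnr a; rewrite -mulrA; exists x. Qed.

Lemma two_sided_ideal_converse (R : nzRingType) (A : R -> Prop) :
  two_sided_ideal A -> @two_sided_ideal R^c A.
Proof.
move=> [rA lA]; split; last by move=> x a Aa; exact: (ridealM rA x Aa).
split; [exact: (rideal0 rA) | exact: (ridealB rA) | by move=> x r Ax; exact: (lA r x Ax)].
Qed.

Lemma orthogonal_idempotents_of_converse (R : nzRingType) (A : R -> Prop) g :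
  @orthogonal_idempotents R^c A g -> orthogonal_idempotents A g.
Proof. by case=> orth idem nA; split=> // i j ne_ij; apply: orth => /esym. Qed.

Lemma artinian_no_orthogonal (R : nzRingType) (A : R -> Prop) :
  two_sided_ideal A -> quotient_artinian A -> forall g, ~ orthogonal_idempotents A g.
Proof.
move=> hA art g [orth idem nA]; have rA := hA.1.
pose J n x := forall i, (i < n)%N -> A (g i * x).
have hJ n : right_ideal (J n) /\ (forall a, A a -> J n a).
  split; last by move=> a Aa i _; apply: (idealMl hA).
  split.
  - by move=> i _; rewrite mulr0; apply: (rideal0 rA).
  - by move=> x y Jx Jy i lt_in; rewrite mulrBr; apply: (ridealB rA); [apply: Jx | apply: Jy].
  - by move=> x r Jx i lt_in; rewrite mulrA; apply: (ridealM rA); apply: Jx.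
have [N stable] := art J hJ (fun n x Jx i lt_in => Jx i (ltnW lt_in)).
have JN : J N (g N) by move=> i lt_iN; apply: orth => eq_iN; rewrite eq_iN ltnn in lt_iN.
have /(_ N (ltnSn N)) : J N.+1 (g N) by apply/(stable N.+1 (leqnSn N)).
by move=> AgN; apply: (nA N); apply: (idem_mod_in_ideal hA).
Qed.

(* The left annihilators of the J_n form an ascending chain of left ideals,
   i.e. of right ideals of R^c; their union is principal modulo A. *)
Lemma artinian_of_no_orthogonal (R : nzRingType) (A : R -> Prop) :
  two_sided_ideal A -> von_neumann_regular R ->
  (forall g, ~ orthogonal_idempotents A g) -> quotient_artinian A.
Proof.
move=> hA vnr noorth J hJ decr; have rA := hA.1.
have mono n m x : (n <= m)%N -> J m x -> J n x.
  elim: m => [|m IH]; first by rewrite leqn0 => /eqP ->.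
  by rewrite leq_eqVlt => /orP[/eqP -> //|/IH le_nm /decr].
pose U x := exists n, forall y, J n y -> A (x * y).
have rU : @right_ideal R^c U.
  split.
  - by exists 0%N => y _; rewrite mul0r; apply: (rideal0 rA).
  - move=> x x' [n Hn] [n' Hn']; exists (maxn n n') => y Jy; rewrite mulrBl.
    by apply: (ridealB rA); [apply: Hn; apply: mono (leq_maxl n n') Jy
                            | apply: Hn'; apply: mono (leq_maxr n n') Jy].
  - move=> x r [n Hn]; exists n => y Jy.
    by have := idealMl hA r (Hn y Jy); rewrite mulrA; apply.
have noorth_c g : ~ @orthogonal_idempotents R^c A g.
  by move=> /orthogonal_idempotents_of_converse; apply: noorth.
have [u [[N uJN] Hu]] : exists u : R, U u /\ forall y, U y -> A (y - y * u).
  have [u [Uu _ Hu]] := principal_mod_of_no_orthogonal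
    (two_sided_ideal_converse hA) (regular_converse vnr) rU noorth_c.
  by exists u; split; [exact Uu | exact Hu].
exists N => n le_Nn x; split; first exact: mono.
move=> JNx; have [e [Je _ He_n]] :=
  principal_mod_of_no_orthogonal hA vnr (hJ n).1 noorth.
have U1e : U (1 - e) by exists n => y Jy; rewrite mulrBl mul1r; apply: He_n.
have A1ex : A ((1 - e) * x).
  have -> : (1 - e) * x = ((1 - e) - (1 - e) * u) * x + (1 - e) * (u * x).
    by rewrite [in RHS]mulrBl -mulrA subrK.
  apply: (ridealD rA); first by apply: (ridealM rA); apply: Hu.
  by apply: (idealMl hA); apply: uJN.
have [rJn AJn] := hJ n.
have -> : x = e * x + (1 - e) * x by rewrite mulrBl mul1r addrC subrK.
by apply: (ridealD rJn); [apply: (ridealM rJn) | apply: AJn].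
Qed.

Lemma not_in_list (s : list nat) : exists n, ~ In n s.
Proof.
exists (list_max s).+1 => in_s.
have /Forall_forall /(_ _ in_s) /leP := proj1 (list_max_le s (list_max s)) (le_n _).
by rewrite ltnn.
Qed.

Section RightModule.
Variables (R : nzRingType) (M : lmodType R^c).

Lemma ractM (m : M) x y : ract m (x * y) = ract (ract m x) y.
Proof. by rewrite /ract scalerA. Qed.

Lemma ractD (m : M) x y : ract m (x + y) = ract m x + ract m y.
Proof. by rewrite /ract scalerDl. Qed.

Lemma ractB (m : M) x y : ract m (x - y) = ract m x - ract m y.
Proof. by rewrite /ract scalerBl. Qed.

Lemma ractr0 (m : M) : ract m 0 = 0.
Proof. by rewrite /ract scale0r. Qed.

Lemma ract0m r : ract (0 : M) r = 0.
Proof. by rewrite /ract scaler0. Qed.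

Lemma Ann_two_sided_ideal : two_sided_ideal (Ann M).
Proof.
split; last by move=> x a Aa m; rewrite ractM Aa.
split.
- by move=> m; rewrite ractr0.
- by move=> x y Ax Ay m; rewrite ractB Ax Ay subr0.
- by move=> x r Ax m; rewrite ractM Ax ract0m.
Qed.

(* With m_n g_n <> 0, the map x |-> (m_n g_n x)_n is defined on the right ideal
   generated by the g_n, but its extension h would satisfy h(g_n) = h(1) g_n,
   which vanishes outside the finite support of h(1). *)
Lemma Sigma_no_orthogonal : Sigma_aleph0_injective M ->
  forall g, ~ orthogonal_idempotents (Ann M) g.
Proof.
move=> Sig g [orth idem nAnn].
have [m Hm] : exists m : nat -> M, forall n, ract (m n) (g n) <> 0.
  apply: (choice (fun n (m : M) => ract m (g n) <> 0)) => n.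
  apply: NNPP => Hn; apply: (nAnn n) => m0.
  by apply: NNPP => ne; apply: Hn; exists m0.
have hA := Ann_two_sided_ideal.
pose f x n := ract (m n) (g n * x).
have supp_f x : gen_right_ideal g x -> fin_supp (f x).
  move=> [K [r ->]]; exists (List.seq 0 K) => l l_out.
  have le_Kl : (K <= l)%N.
    by rewrite leqNgt; apply/negP => /ltP lt_lK; apply: l_out; apply/in_seq; split=> //; apply/leP.
  rewrite /f mulr_sumr; apply: (rideal_sum hA.1) => i; rewrite mulrA.
  apply: (ridealM hA.1); apply: orth => eq_li.
  by move: (ltn_ord i); rewrite -eq_li ltnNge le_Kl.
have fD x y : gen_right_ideal g x -> gen_right_ideal g y -> f (x + y) = dsum_add (f x) (f y).
  by move=> _ _; apply: functional_extensionality => n; rewrite /f mulrDr ractD.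
have fM x r : gen_right_ideal g x -> f (x * r) = dsum_act (f x) r.
  by move=> _; apply: functional_extensionality => n; rewrite /f mulrA ractM.
have [h [supp_h _ hM hf]] := Sig nat g f supp_f fD fM.
have [s hs] := supp_h 1; have [n n_out] := not_in_list s.
apply: (Hm n); have := congr1 (fun u => u n) (hM 1 (g n)).
rewrite mul1r hf; last exact: gen_right_ideal_gen.
rewrite /dsum_act hs // ract0m /f => <-.
by apply/eqP; rewrite eq_sym -subr_eq0 -ractB idem.
Qed.

(* With e generating I modulo Ann(M), f x = f(e x) + f(x - e x) = f(e) x, since
   f vanishes on I meet Ann(M): such a y equals y (z y) with z y in Ann(M). *)
Lemma Sigma_of_no_orthogonal : von_neumann_regular R ->
  (forall g, ~ orthogonal_idempotents (Ann M) g) -> Sigma_aleph0_injective M.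
Proof.
move=> vnr noorth L g f I supp_f fD fM.
have hA := Ann_two_sided_ideal; have hI : right_ideal I := right_ideal_gen g.
have [e [Ie _ He]] := principal_mod_of_no_orthogonal hA vnr hI noorth.
have f_Ann y : I y -> Ann M y -> f y = fun _ => 0.
  move=> Iy Ay; have [z yzy] := vnr y.
  rewrite -yzy -mulrA (fM _ _ Iy); apply: functional_extensionality => l.
  exact: (idealMl hA z Ay).
exists (dsum_act (f e)); split.
- move=> x; have [s hs] := supp_f e Ie.
  by exists s => l l_out; rewrite /dsum_act hs // ract0m.
- by move=> x y; apply: functional_extensionality => l; rewrite /dsum_act /dsum_add ractD.
- by move=> x r; apply: functional_extensionality => l; rewrite /dsum_act ractM.
move=> x Ix; have Iex : I (e * x) by apply: (ridealM hI).
have Ix' : I (x - e * x) by apply: (ridealB hI).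
have -> : f x = dsum_add (f (e * x)) (f (x - e * x)) by rewrite -fD // addrC subrK.
rewrite (f_Ann _ Ix' (He _ Ix)) (fM _ _ Ie).
by apply: functional_extensionality => l; rewrite /dsum_add addr0.
Qed.

End RightModule.

Theorem lemma3p4 (R : nzRingType) (M : lmodType R^c) :
  von_neumann_regular R ->
  (Sigma_aleph0_injective M <-> quotient_artinian (Ann M)).
Proof.
move=> vnr; have hA := @Ann_two_sided_ideal R M; split=> [Sig | art].
- exact: artinian_of_no_orthogonal hA vnr (Sigma_no_orthogonal Sig).
- exact: Sigma_of_no_orthogonal vnr (artinian_no_orthogonal hA art).
Qed.
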